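(* Under the setting described in the context (deterministic case, with exact partial gradients $G_{i_k} = U_{i_k}^T g(x_k)$, i.e. $\bar\sigma_k = 0$ for $k=1,\ldots,N$), suppose the random block indices $\{i_k\}$ are uniformly distributed, i.e. $p_1 = \cdots = p_b = 1/b$, and the stepsizes are set to $\gamma_k = 1/\bar L$, $k = 1,\ldots,N$, where $\bar L := \max_{i=1,\ldots,b} L_i$. Then for any $N \ge 1$, $$\mathbb{E}\big[\|\mathcal{G}_X(x_R, g(x_R), \gamma_R)\|^2\big] \le \frac{2 b \bar L\,[\phi(x_1) - \phi^*]}{N}.$$
   Context: Consider the composite problem $\phi^* := \min_{x \in X}\{\phi(x) := f(x) + \chi(x)\}$, where $X = X_1 \times \cdots \times X_b$ with $X_i \subseteq \mathbb{R}^{n_i}$ closed convex, $\sum_i n_i = n$. Let $U_i \in \mathbb{R}^{n\times n_i}$ with $(U_1,\ldots,U_b) = I_n$, $x^{(i)} = U_i^T x$, and $\|x\|^2 = \sum_{i=1}^b \|x^{(i)}\|_i^2$. The function $f$ is smooth but possibly nonconvex, with gradient $g(\cdot)$ whose blocks $g_i = U_i^T g$ satisfy $\|g_i(x + U_i\rho_i) - g_i(x)\|_{i,*} \le L_i \|\rho_i\|_i$ for all $\rho_i \in \mathbb{R}^{n_i}$. The function $\chi$ is convex and block separable: $\chi(x) = \sum_i \chi_i(x^{(i)})$ with $\chi_i$ closed convex. For each $i$, $\omega_i: X_i \to \mathbb{R}$ is continuously differentiable and $1$-strongly convex w.r.t. $\|\cdot\|_i$, with Bregman distance $V_i(z,x)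 = \omega_i(x) - \omega_i(z) - \langle \nabla\omega_i(z), x - z\rangle$, satisfying the quadratic growth condition $V_i(z,x) \le \frac{Q}{2}\|z - x\|_i^2$. The composite prox-mapping is $\mathcal{P}_i(x, y, \gamma) := \arg\min_{z \in X_i} \{\langle y, z - x\rangle + \frac{1}{\gamma} V_i(z,x) + \chi_i(z)\}$, and the composite projected gradient $\mathcal{G}_X(x,y,\gamma) = (\mathcal{G}_1,\ldots,\mathcal{G}_b)$ has blocks $\mathcal{G}_i(x,y,\gamma) := \frac{1}{\gamma}[U_i^T x - \mathcal{P}_i(U_i^T x, U_i^T y, \gamma)]$. The nonconvex stochastic block mirror descent algorithm: given $x_1 \in X$, stepsizes $\gamma_k < 2/L_i$ and probabilities $p_i$, for $k = 1,\ldots,N$ draw $i_k$ with $\Pr\{i_k = i\} = p_i$, compute the partial gradient $G_{i_k}$ (here $G_{i_k} = U_{i_k}^T g(x_k)$), and set $x_{k+1}^{(i_k)} = \mathcal{P}_{i_k}(x_k^{(i_k)}, G_{i_k}, \gamma_k)$, $x_{k+1}^{(i)} = x_k^{(i)}$ for $i \ne i_k$. The output is $\bar x_N = x_R$, where $R$ is random with $\Pr(R = k) = \frac{\gamma_k \min_{i} p_i(1 - \frac{L_i}{2}\gamma_k)}{\sum_{j=1}^N \gamma_j \min_i p_i (1 - \frac{L_i}{2}\gamma_j)}$, $k = 1,\ldots,N$. The expectation is taken w.r.t. $\{i_k\}$ and $R$. *)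

From mathcomp Require Import all_boot all_order all_algebra.
From mathcomp Require Import all_classical all_reals all_analysis.
Import Order.TTheory GRing.Theory Num.Theory numFieldNormedType.Exports.

Set Implicit Arguments.
Unset Strict Implicit.
Unset Printing Implicit Defensive.

Local Open Scope ring_scope.
Local Open Scope classical_set_scope.

Section Defs.
Variable R : realType.

Definition dotr (m : nat) (y z : 'rV[R]_m) : R := \sum_(j < m) y 0 j * z 0 j.

Definition is_norm (m : nat) (nr : 'rV[R]_m -> R) : Prop :=
  [/\ (forall z, 0 <= nr z),
      (forall z, nr z = 0 -> z = 0),
      (forall (a : R) z, nr (a *: z) = `|a| * nr z) &
      (forall z w, nr (z + w) <= nr z + nr w)].

(* ||y||_* <= c, where ||y||_* := sup_{ ||z|| <= 1 } <y, z> is the dual norm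
   of nr (this is the literal unfolding of "sup <= c"). *)
Definition dual_norm_le (m : nat) (nr : 'rV[R]_m -> R) (y : 'rV[R]_m) (c : R)
  : Prop := forall z, nr z <= 1 -> dotr y z <= c.

Definition strongly_convex_on (m : nat) (X : set 'rV[R]_m)
  (nr : 'rV[R]_m -> R) (h : 'rV[R]_m -> R) : Prop :=
  forall x y (t : R), x \in X -> y \in X -> 0 <= t <= 1 ->
    h (t *: x + (1 - t) *: y)
      <= t * h x + (1 - t) * h y - t * (1 - t) / 2 * nr (x - y) ^+ 2.

Definition closed_fun_on (m : nat) (X : set 'rV[R]_m) (h : 'rV[R]_m -> R)
  : Prop :=
  lower_semicontinuous (fun z => if z \in X then (h z)%:E else +oo%E).

Definition has_gradient_at (m : nat) (h : 'rV[R]_m -> R)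
  (dh : 'rV[R]_m -> 'rV[R]_m) (z : 'rV[R]_m) : Prop :=
  differentiable h z /\ forall v, 'd h z v = dotr (dh z) v.

Definition bregman (m : nat) (omega : 'rV[R]_m -> R)
  (domega : 'rV[R]_m -> 'rV[R]_m) (z x : 'rV[R]_m) : R :=
  omega x - omega z - dotr (domega z) (x - z).

Definition prox_obj (m : nat) (omega : 'rV[R]_m -> R)
  (domega : 'rV[R]_m -> 'rV[R]_m) (chi : 'rV[R]_m -> R)
  (x y : 'rV[R]_m) (gamma : R) (z : 'rV[R]_m) : R :=
  dotr y (z - x) + gamma^-1 * bregman omega domega x z + chi z.

Definition is_prox_map (m : nat) (X : set 'rV[R]_m) (omega : 'rV[R]_m -> R)
  (domega : 'rV[R]_m -> 'rV[R]_m) (chi : 'rV[R]_m -> R)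
  (P : 'rV[R]_m -> 'rV[R]_m -> R -> 'rV[R]_m) : Prop :=
  forall x y (gamma : R), x \in X -> 0 < gamma ->
    P x y gamma \in X /\
    forall z, z \in X ->
      prox_obj omega domega chi x y gamma (P x y gamma)
        <= prox_obj omega domega chi x y gamma z.

Variables (b : nat) (n : 'I_b -> nat).
Local Notation N := (\sum_(i < b) n i)%N.

Definition blk (x : 'rV[R]_N) (i : 'I_b) : 'rV[R]_(n i) := submxrow x i.

Definition embed (i : 'I_b) (rho : 'rV[R]_(n i)) : 'rV[R]_N :=
  mxrow (@dfwith _ (fun j => 'rV[R]_(n j)) (fun j => 0) i rho).

Definition upd (x : 'rV[R]_N) (i : 'I_b) (v : 'rV[R]_(n i)) : 'rV[R]_N :=
  mxrow (@dfwith _ (fun j => 'rV[R]_(n j)) (blk x) i v).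

Definition inX (X : forall i, set 'rV[R]_(n i)) (x : 'rV[R]_N) : Prop :=
  forall i, blk x i \in X i.

Definition phi (f : 'rV[R]_N -> R) (chi : forall i, 'rV[R]_(n i) -> R)
  (x : 'rV[R]_N) : R := f x + \sum_(i < b) chi i (blk x i).

Definition gradmap_sqnorm (nrm : forall i, 'rV[R]_(n i) -> R)
  (P : forall i, 'rV[R]_(n i) -> 'rV[R]_(n i) -> R -> 'rV[R]_(n i))
  (x y : 'rV[R]_N) (gamma : R) : R :=
  \sum_(i < b) nrm i (gamma^-1 *: (blk x i - P i (blk x i) (blk y i) gamma)) ^+ 2.

(* Iterates of the (deterministic-gradient) nonconvex SBMD algorithm for a
   given realization s of the block indices.  0-based: sbmd_iter 0 = x_1,
   and sbmd_iter k.+1 is obtained from sbmd_iter k using block s k and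
   stepsize gamma k (paper: x_{k+2} from x_{k+1} with i_{k+1}, gamma_{k+1}). *)
Fixpoint sbmd_iter (K : nat) (g : 'rV[R]_N -> 'rV[R]_N)
  (P : forall i, 'rV[R]_(n i) -> 'rV[R]_(n i) -> R -> 'rV[R]_(n i))
  (gamma : nat -> R) (x1 : 'rV[R]_N) (s : 'I_K -> 'I_b) (k : nat)
  : 'rV[R]_N :=
  match k with
  | 0 => x1
  | k'.+1 =>
      let x := sbmd_iter g P gamma x1 s k' in
      match (insub k' : option 'I_K) with
      | Some j => let i := s j in
                  upd x (P i (blk x i) (blk (g x) i) (gamma k'))
      | None => x
      end
  end.

Definition bmin (F : 'I_b -> R) : R :=
  match b return ('I_b -> R) -> R with
  | 0 => fun _ => 0
  | b'.+1 => fun F => \big[Num.min/F ord0]_(i < b'.+1) F i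
  end F.

Definition bmax (F : 'I_b -> R) : R :=
  match b return ('I_b -> R) -> R with
  | 0 => fun _ => 0
  | b'.+1 => fun F => \big[Num.max/F ord0]_(i < b'.+1) F i
  end F.

Definition probR_weight (p L : 'I_b -> R) (gamma : nat -> R) (k : nat) : R :=
  gamma k * bmin (fun i => p i * (1 - L i / 2 * gamma k)).

Definition probR (K : nat) (p L : 'I_b -> R) (gamma : nat -> R) (k : nat) : R :=
  probR_weight p L gamma k / \sum_(j < K) probR_weight p L gamma j.

(* E[ ||G_X(x_R, g(x_R), gamma_R)||^2 ], expectation w.r.t. the i.i.d.
   indices i_1..i_K (Pr{i_k = i} = p_i) and the independent random R. *)
Definition expected_gradmap_sqnorm (K : nat) (p L : 'I_b -> R)
  (nrm : forall i, 'rV[R]_(n i) -> R) (g : 'rV[R]_N -> 'rV[R]_N)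
  (P : forall i, 'rV[R]_(n i) -> 'rV[R]_(n i) -> R -> 'rV[R]_(n i))
  (gamma : nat -> R) (x1 : 'rV[R]_N) : R :=
  \sum_(s : {ffun 'I_K -> 'I_b})
    (\prod_(j < K) p (s j)) *
    \sum_(k < K) probR K p L gamma k *
      (let xk := sbmd_iter g P gamma x1 s k in
       gradmap_sqnorm nrm P xk (g xk) (gamma k)).

End Defs.

(* With exact partial gradients and gamma = 1/Lbar, one block step decreases phi
   by at least ||G_i(x_k)||^2 / (2 Lbar): the block descent lemma controls the
   smooth part f, and the optimality of the prox-point, together with
   V(x, z) >= ||z - x||^2 / 2, controls chi_i.  For a uniformly drawn block the
   expectation of ||G_i||^2 is ||G_X||^2 / b, the law of R is uniform because
   the stepsizes are constant, and telescoping the expected decrease over N steps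
   against phi(x_N) >= phi^* gives the bound. *)

From mathcomp Require Import all_boot all_order all_algebra.
From mathcomp Require Import all_classical all_reals all_analysis.
Import Order.TTheory GRing.Theory Num.Theory numFieldNormedType.Exports.
From mathcomp Require Import ring lra.

Set Implicit Arguments.
Unset Strict Implicit.
Unset Printing Implicit Defensive.

Local Open Scope ring_scope.
Local Open Scope classical_set_scope.

Section InnerProduct.
Variable R : realType.

Lemma dotr0r m (y : 'rV[R]_m) : dotr y 0 = 0.
Proof. by rewrite /dotr big1 // => j _; rewrite mxE mulr0. Qed.

Lemma dotrZr m (a : R) (y z : 'rV[R]_m) : dotr y (a *: z) = a * dotr y z.
Proof. by rewrite /dotr mulr_sumr; apply: eq_bigr => j _; rewrite mxE mulrCA. Qed.

Lemma dotrBl m (y z w : 'rV[R]_m) : dotr (y - z) w = dotr y w - dotr z w.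
Proof. by rewrite /dotr -sumrB; apply: eq_bigr => j _; rewrite !mxE mulrBl. Qed.

Lemma dotr_le_dual_norm m (nr : 'rV[R]_m -> R) (y z : 'rV[R]_m) (c : R) :
  is_norm nr -> dual_norm_le nr y c -> dotr y z <= c * nr z.
Proof.
move=> [nr_ge0 nr_eq0 nrZ _] yc.
have [nz0|nz_neq0] := eqVneq (nr z) 0.
  by rewrite nz0 mulr0 (nr_eq0 _ nz0) dotr0r.
have nz_gt0 : 0 < nr z by rewrite lt_neqAle eq_sym nz_neq0 nr_ge0.
have := yc ((nr z)^-1 *: z).
rewrite nrZ ger0_norm ?invr_ge0 // mulVf // lexx dotrZr => /(_ isT).
by rewrite ler_pdivrMl // mulrC.
Qed.

End InnerProduct.

Section Blocks.
Variables (R : realType) (b : nat) (n : 'I_b -> nat).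
Local Notation N := (\sum_(i < b) n i)%N.

Lemma dotr_blk (y z : 'rV[R]_N) :
  dotr y z = \sum_(i < b) dotr (blk y i) (blk z i).
Proof.
have dotrE m (u v : 'rV[R]_m) : dotr u v = (u *m v^T) 0 0.
  by rewrite /dotr mxE; apply: eq_bigr => j _; rewrite mxE.
rewrite dotrE -{1}(submxrowK y) -{1}(submxrowK z) tr_mxrow mul_mxrow_mxcol.
by rewrite summxE; apply: eq_bigr => i _; rewrite dotrE /blk tr_submxrow.
Qed.

Lemma blk_embed_eq i (d : 'rV[R]_(n i)) : blk (embed d) i = d.
Proof. by rewrite /blk /embed mxrowK; case: eqP => // ii; rewrite eq_axiomK. Qed.

Lemma blk_embed_neq i (d : 'rV[R]_(n i)) j : i != j -> blk (embed d) j = 0.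
Proof. by rewrite /blk /embed mxrowK; case: eqP => // -> /negP. Qed.

Lemma blk_upd_eq x i (v : 'rV[R]_(n i)) : blk (upd x v) i = v.
Proof. by rewrite /blk /upd mxrowK; case: eqP => // ii; rewrite eq_axiomK. Qed.

Lemma blk_upd_neq x i (v : 'rV[R]_(n i)) j : i != j -> blk (upd x v) j = blk x j.
Proof. by rewrite /blk /upd mxrowK; case: eqP => // -> /negP. Qed.

Lemma embedZ i (a : R) (d : 'rV[R]_(n i)) : embed (a *: d) = a *: embed d.
Proof.
apply/mxrowP => j; rewrite -/(blk _ j) -/(blk _ j).
have -> : blk (a *: embed d) j = a *: blk (embed d) j.
  by apply/matrixP => k l; rewrite !mxE.
have [<-|ij] := eqVneq i j; first by rewrite !blk_embed_eq.
by rewrite !blk_embed_neq // scaler0.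
Qed.

Lemma upd_embed x i (v : 'rV[R]_(n i)) : upd x v = x + embed (v - blk x i).
Proof.
apply/mxrowP => j; rewrite -/(blk _ j) -/(blk _ j) /blk submxrowD -!/(blk _ j).
have [<-|ij] := eqVneq i j; first by rewrite blk_upd_eq blk_embed_eq addrC subrK.
by rewrite blk_upd_neq // blk_embed_neq // addr0.
Qed.

Lemma dotr_embed (y : 'rV[R]_N) i (d : 'rV[R]_(n i)) :
  dotr y (embed d) = dotr (blk y i) d.
Proof.
rewrite dotr_blk (bigD1 i) //= blk_embed_eq big1 ?addr0 // => j ji.
by rewrite blk_embed_neq 1?eq_sym // dotr0r.
Qed.

Lemma phi_upd f (chi : forall i, 'rV[R]_(n i) -> R) x i (v : 'rV[R]_(n i)) :
  phi f chi (upd x v) = f (upd x v) - f x + chi i v - chi i (blk x i) + phi f chi x.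
Proof.
rewrite /phi (bigD1 i) //= [in RHS](bigD1 i) //= blk_upd_eq.
rewrite (eq_bigr (fun j => chi j (blk x j))) => [|j ji]; first by ring.
by rewrite blk_upd_neq // eq_sym.
Qed.

End Blocks.

Section ProxDescent.
Variable R : realType.
Local Open Scope convex_scope.

(* The derivative of [om] at [x] along [z - x] is the limit at [0+] of
   difference quotients that strong convexity bounds by
   [om z - om x - (1 - h) nr (z - x) ^+ 2 / 2]. *)
Lemma bregman_ge_half_sqnorm m (X : set 'rV[R]_m) nr om dom (x z : 'rV[R]_m) :
  strongly_convex_on X nr om -> has_gradient_at om dom x ->
  x \in X -> z \in X -> nr (z - x) ^+ 2 / 2 <= bregman om dom x z.
Proof.
move=> sc [dx dxE] xX zX.
set D := nr (z - x) ^+ 2.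
rewrite /bregman -dxE -deriveE //.
have := @diff_derivable _ _ _ _ _ (z - x) dx; rewrite /derivable.
set q := (fun h : R => _) => q_cvg.
have q_cvg_right : q @ 0^'+ --> 'D_(z - x) om x.
  apply: cvg_trans q_cvg; apply: cvg_app; apply: within_subset => h /= h0.
  by rewrite gt_eqF.
have lin_cvg : (fun h : R => h * (D / 2)) @ 0^'+ --> 0 * (D / 2).
  by apply: cvg_at_right_filter; apply: cvgMr_tmp; exact: cvg_id.
have qD_cvg : (fun h => q h - h * (D / 2)) @ 0^'+ --> 'D_(z - x) om x - 0 * (D / 2).
  exact: cvgB.
rewrite mul0r subr0 in qD_cvg.
suff : 'D_(z - x) om x <= om z - om x - D / 2 by lra.
apply: (cvgr_to_le qD_cvg); near=> h.
have h0 : 0 < h by near: h; exact: nbhs_right_gt.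
have h1 : h < 1 by near: h; exact: nbhs_right_lt.
have := sc z x h zX xX; rewrite (ltW h0) (ltW h1) => /(_ isT).
have -> : h *: z + (1 - h) *: x = h *: (z - x) + x.
  by apply/matrixP => i j; rewrite !mxE; ring.
rewrite /q /= -/D; change (scalemx h (z - x)) with (h *: (z - x)).
set w := om _ => sc_h.
suff : h^-1 * (w - om x) <= om z - om x - D / 2 + h * (D / 2).
  by change (h^-1 *: (w - om x)) with (h^-1 * (w - om x)); lra.
rewrite mulrC ler_pdivrMr //.
clearbody D w.
have -> : (om z - om x - D / 2 + h * (D / 2)) * h =
  h * om z + (1 - h) * om x - h * (1 - h) / 2 * D - om x by ring.
lra.
Unshelve. all: by end_near.
Qed.

Lemma le0_of_forall_le_mul (u c : R) :
  0 <= c -> (forall t, 0 < t -> t < 1 -> u <= t * c) -> u <= 0.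
Proof.
move=> c0 H; rewrite leNgt; apply/negP => u0.
have cu : 0 < c + u by lra.
have t0 : 0 < u / (2 * (c + u)) by apply: divr_gt0 => //; lra.
have t1 : u / (2 * (c + u)) < 1 by rewrite ltr_pdivrMr ?mulr_gt0 //; lra.
have := H _ t0 t1.
rewrite mulrAC ler_pdivlMr ?mulr_gt0 //; nra.
Qed.

(* Compare the prox-point [xp] with the points [t x + (1 - t) xp] of the
   segment to [x], using convexity of [chi], strong convexity of [om] and the
   lower bound on the Bregman distance, and let [t] go to [0]. *)
Lemma prox_map_descent m (X : set 'rV[R]_m) nr om dom chi P (x y : 'rV[R]_m) gamma :
  is_norm nr -> convex_set X -> strongly_convex_on X nr om ->
  (forall z, z \in X -> has_gradient_at om dom z) ->
  convex_function X chi -> is_prox_map X om dom chi P ->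
  x \in X -> 0 < gamma ->
  dotr y (P x y gamma - x) + chi (P x y gamma) - chi x
    <= - gamma^-1 * nr (P x y gamma - x) ^+ 2.
Proof.
move=> [_ _ nrZ _] cX sc om_grad chi_cvx hP xX g0.
have [pX Pmin] := hP x y gamma xX g0.
set xp := P x y gamma in pX Pmin *.
set D := nr (xp - x) ^+ 2.
have hB := bregman_ge_half_sqnorm sc (om_grad x xX) xX pX.
have ND : nr (x - xp) ^+ 2 = D.
  by rewrite -opprB -scaleN1r nrZ normrN normr1 mul1r.
set a := dotr y (xp - x); set c := dotr (dom x) (xp - x); set ig := gamma^-1.
have ig0 : 0 < ig by rewrite invr_gt0.
move: hB; rewrite /bregman -/c -/D => hB.
suff : a + chi xp - chi x + ig * D <= 0 by lra.
apply: (@le0_of_forall_le_mul _ (ig * D / 2)).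
  by apply: divr_ge0 => //; apply: mulr_ge0; [exact: ltW|exact: sqr_ge0].
move=> t t0 t1.
pose T : {i01 R} := Itv01 (ltW t0) (ltW t1).
pose zt := ((x : convex_lmodType 'rV[R]_m) <| T |> (xp : convex_lmodType 'rV[R]_m)).
have ztE : (zt : 'rV[R]_m) = t *: x + (1 - t) *: xp by [].
have ztX : zt \in X by exact: cX.
have min_zt := Pmin _ ztX.
have om_zt := sc x xp t xX pX; rewrite (ltW t0) (ltW t1) ND in om_zt.
have chi_zt : chi (t *: x + (1 - t) *: xp) <= t * chi x + (1 - t) * chi xp.
  exact: (chi_cvx T x xp xX pX).
have segE : t *: x + (1 - t) *: xp - x = (1 - t) *: (xp - x).
  by apply/matrixP => i j; rewrite !mxE; ring.
move: min_zt om_zt; rewrite ztE /prox_obj /bregman segE !dotrZr -/a -/c -/ig.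
move=> min_zt /(_ isT) om_zt.
set w := om (t *: x + _) in min_zt om_zt; set k := chi (t *: x + _) in min_zt chi_zt.
clearbody D a c ig w k.
have om_zt' : ig * w <= ig * (t * om x + (1 - t) * om xp - t * (1 - t) / 2 * D).
  by rewrite ler_pM2l.
have hB' : ig * (D / 2) <= ig * (om xp - om x - c) by rewrite ler_pM2l.
suff : t * (a + chi xp - chi x + ig * D) <= t * (t * (ig * D / 2)).
  by rewrite ler_pM2l.
nra.
Qed.

End ProxDescent.

Section DescentLemma.
Variable R : realType.

Lemma is_derive_quadratic (c K t : R) :
  is_derive t 1 (fun s : R => s * c + s * s * (K / 2)) (c + t * K).
Proof.
apply: is_derive_eq; rewrite !scaler0 !add0r /GRing.scale /= !mulr1.
by change (c + K / 2 * (t + t) = c + t * K); field.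
Qed.

Lemma is_derive_along m (f : 'rV[R]_m -> R) g (x e : 'rV[R]_m) (t : R) :
  has_gradient_at f g (x + t *: e) ->
  is_derive t 1 (fun s : R => f (x + s *: e)) (dotr (g (x + t *: e)) e).
Proof.
move=> [df dfE].
have shiftE : (fun h : R => h^-1 *: (((fun s : R => f (x + s *: e)) \o shift t) (h *: 1)
                                    - f (x + t *: e))) =
              (fun h : R => h^-1 *: ((f \o shift (x + t *: e)) (h *: e) - f (x + t *: e))).
  apply: funext => h /=; congr (_ *: (f _ - _)).
  by apply/matrixP => i j; rewrite !mxE -[h%:A]/(h * 1) mulr1; ring.
apply: DeriveDef; first by rewrite /derivable shiftE; exact: diff_derivable.
by rewrite /derive shiftE -/(derive f (x + t *: e) e) deriveE // dfE.
Qed.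

(* Mean value theorem for [s |-> f (x + s e) - s <g x, e> - s^2 K / 2] on [0, 1]. *)
Lemma descent_lemma m (f : 'rV[R]_m -> R) g (x e : 'rV[R]_m) (K : R) :
  (forall z, has_gradient_at f g z) ->
  (forall t, 0 < t -> t < 1 -> dotr (g (x + t *: e)) e - dotr (g x) e <= t * K) ->
  f (x + e) <= f x + dotr (g x) e + K / 2.
Proof.
move=> f_grad g_lip; set c := dotr (g x) e.
pose k s := f (x + s *: e) - (s * c + s * s * (K / 2)).
have k_der (t : R) : is_derive t 1 k (dotr (g (x + t *: e)) e - (c + t * K)).
  exact: (is_deriveB (is_derive_along (f_grad (x + t *: e))) (is_derive_quadratic c K t)).
have k_cont : {within `[0, 1], continuous k}.
  apply: derivable_within_continuous => t _.
  exact: (@ex_derive _ _ _ _ _ _ _ (k_der t)).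
have [t] := MVT ltr01 (fun t _ => k_der t) k_cont.
rewrite in_itv /= => /andP[t0 t1].
rewrite /k scale1r scale0r addr0 subr0 mulr1 !mul1r !mul0r.
have := g_lip t t0 t1; rewrite -/c; lra.
Qed.

End DescentLemma.

Section BlockStep.
Variables (R : realType) (b : nat) (n : 'I_b -> nat).
Local Notation N := (\sum_(i < b) n i)%N.

Lemma block_prox_descent (X : forall i, set 'rV[R]_(n i))
  (nrm : forall i, 'rV[R]_(n i) -> R) (f : 'rV[R]_N -> R) (g : 'rV[R]_N -> 'rV[R]_N)
  (L : 'I_b -> R) (chi omega : forall i, 'rV[R]_(n i) -> R)
  (domega : forall i, 'rV[R]_(n i) -> 'rV[R]_(n i))
  (P : forall i, 'rV[R]_(n i) -> 'rV[R]_(n i) -> R -> 'rV[R]_(n i))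
  (x : 'rV[R]_N) (i : 'I_b) (gamma : R) :
  is_norm (nrm i) -> convex_set (X i) ->
  (forall x, has_gradient_at f g x) ->
  (forall x (rho : 'rV[R]_(n i)),
      dual_norm_le (nrm i) (blk (g (x + embed rho)) i - blk (g x) i)
                   (L i * nrm i rho)) ->
  convex_function (X i) (chi i) ->
  (forall z, z \in X i -> has_gradient_at (omega i) (domega i) z) ->
  strongly_convex_on (X i) (nrm i) (omega i) ->
  is_prox_map (X i) (omega i) (domega i) (chi i) (P i) ->
  blk x i \in X i -> 0 < gamma ->
  phi f chi (upd x (P i (blk x i) (blk (g x) i) gamma))
    <= phi f chi x - gamma * (1 - L i / 2 * gamma) *
        nrm i (gamma^-1 *: (blk x i - P i (blk x i) (blk (g x) i) gamma)) ^+ 2.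
Proof.
move=> nrm_i cX f_grad g_lip chi_cvx om_grad om_sc hP xX g0.
have [_ _ nrZ _] := nrm_i.
set v := P i _ _ gamma; set d := v - blk x i; set D := nrm i d ^+ 2.
have f_step : f (x + embed d) <= f x + dotr (blk (g x) i) d + L i * D / 2.
  rewrite -dotr_embed mulrA; apply: descent_lemma => // t t0 t1.
  rewrite -embedZ !dotr_embed -dotrBl.
  apply: le_trans (dotr_le_dual_norm d nrm_i (g_lip x (t *: d))) _.
  by rewrite nrZ ger0_norm ?(ltW t0) // !mulrA [L i * t]mulrC.
have chi_step := prox_map_descent (blk (g x) i) nrm_i cX om_sc om_grad chi_cvx hP xX g0.
rewrite -/v -/d -/D in chi_step.
have ND : nrm i (gamma^-1 *: (blk x i - v)) ^+ 2 = gamma^-1 ^+ 2 * D.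
  rewrite nrZ -opprB -scaleN1r nrZ normrN normr1 mul1r ger0_norm ?invr_ge0 ?ltW //.
  by rewrite exprMn.
rewrite ND phi_upd upd_embed -/d.
have -> : gamma * (1 - L i / 2 * gamma) * (gamma^-1 ^+ 2 * D)
          = gamma^-1 * D - L i * D / 2 by field; rewrite gt_eqF.
lra.
Qed.

End BlockStep.

Section Iterates.
Variables (R : realType) (b : nat) (n : 'I_b -> nat).
Local Notation N := (\sum_(i < b) n i)%N.
Variables (K : nat) (g : 'rV[R]_N -> 'rV[R]_N)
  (P : forall i, 'rV[R]_(n i) -> 'rV[R]_(n i) -> R -> 'rV[R]_(n i))
  (gamma : nat -> R) (x1 : 'rV[R]_N).
Arguments P : clear implicits.
Local Notation x_ s k := (sbmd_iter g P gamma x1 s k).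

Lemma sbmd_iterS (s : 'I_K -> 'I_b) (k : 'I_K) :
  x_ s k.+1 =
    upd (x_ s k) (P (s k) (blk (x_ s k) (s k)) (blk (g (x_ s k)) (s k)) (gamma k)).
Proof.
rewrite /= insubT /= => [|kK]; first exact: ltn_ord.
by rewrite (_ : Sub (k : nat) kK = k) //; exact: val_inj.
Qed.

Lemma sbmd_iter_eq (s s' : 'I_K -> 'I_b) k :
  (forall j : 'I_K, (j < k)%N -> s j = s' j) -> x_ s k = x_ s' k.
Proof.
elim: k => [//|k IH] ss' /=.
rewrite IH => [|j jk]; last by apply: ss'; exact: ltnW.
by case: insubP => [j _ jE|//]; rewrite ss' // jE.
Qed.

Lemma sbmd_iter_inX (X : forall i, set 'rV[R]_(n i)) (s : 'I_K -> 'I_b) k :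
  (forall i u y (c : R), u \in X i -> 0 < c -> P i u y c \in X i) ->
  (forall k, 0 < gamma k) -> inX X x1 -> inX X (x_ s k).
Proof.
move=> PX gamma_gt0 x1X; elim: k => [//|k IH] /=.
case: insubP => [j _ jE|//] i.
have [<-|ij] := eqVneq (s j) i; first by rewrite blk_upd_eq; apply: PX.
by rewrite blk_upd_neq.
Qed.

End Iterates.

(* Changing coordinate [k] of [s] by the shift [c] permutes the index
   functions, so the value [s k] is uniformly distributed on ['I_b]. *)
Lemma sum_ffun_coord (R : realType) (b K : nat) (k : 'I_K)
  (h : {ffun 'I_K -> 'I_b} -> 'I_b -> R) :
  (0 < b)%N ->
  (forall (s : {ffun 'I_K -> 'I_b}) c, h [ffun j => if j == k then c else s j] = h s) ->
  \sum_s h s (s k) = b%:R^-1 * \sum_s \sum_i h s i.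
Proof.
case: b h => [//|b'] h _ h_inv.
have shift c : \sum_s h s (s k) = \sum_s h s (s k + c).
  rewrite (reindex_inj (h := fun s : {ffun 'I_K -> 'I_b'.+1} =>
              [ffun j => if j == k then s j + c else s j])); last first.
    move=> s1 s2 /ffunP s12; apply/ffunP => j; have := s12 j; rewrite !ffunE.
    by case: eqP => _ //; apply: addIr.
  apply: eq_bigr => s _; rewrite ffunE eqxx -[in RHS](h_inv s (s k + c)).
  by congr h; apply/ffunP => j; rewrite !ffunE; case: eqP => // ->.
have sum_shifts : \sum_(c : 'I_b'.+1) \sum_s h s (s k) = \sum_s \sum_i h s i.
  rewrite (eq_bigr _ (fun c _ => shift c)) exchange_big.
  by apply: eq_bigr => s _; rewrite [RHS](reindex_inj (addrI (s k))).
by rewrite -sum_shifts sumr_const card_ord; field; rewrite nat1r pnatr_eq0.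
Qed.

Lemma le_bmax (R : realType) (b : nat) (F : 'I_b -> R) i : F i <= bmax F.
Proof. by move: F i; case: b => [F []//|b' F i]; exact: le_bigmax. Qed.

Lemma bmin_gt0 (R : realType) (b : nat) (F : 'I_b -> R) :
  (0 < b)%N -> (forall i, 0 < F i) -> 0 < bmin F.
Proof. by case: b F => // b' F _ F_gt0; exact: lt_bigmin. Qed.

Section UniformSBMD.
(* Keeps the block index [i] of the section variables below explicit. *)
Unset Implicit Arguments.
Variables (R : realType) (b : nat) (n : 'I_b -> nat).
Local Notation N := (\sum_(i < b) n i)%N.
Variables (X : forall i, set 'rV[R]_(n i)) (nrm : forall i, 'rV[R]_(n i) -> R)
  (f : 'rV[R]_N -> R) (g : 'rV[R]_N -> 'rV[R]_N) (L : 'I_b -> R)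
  (chi omega : forall i, 'rV[R]_(n i) -> R)
  (domega : forall i, 'rV[R]_(n i) -> 'rV[R]_(n i))
  (P : forall i, 'rV[R]_(n i) -> 'rV[R]_(n i) -> R -> 'rV[R]_(n i))
  (phistar : R) (x1 : 'rV[R]_N) (K : nat).
Hypotheses (b_gt0 : (0 < b)%N) (nrm_norm : forall i, is_norm (nrm i))
  (X_convex : forall i, convex_set (X i))
  (f_grad : forall x, has_gradient_at f g x) (L_gt0 : forall i, 0 < L i)
  (g_lip : forall i x (rho : 'rV[R]_(n i)),
      dual_norm_le (nrm i) (blk (g (x + embed rho)) i - blk (g x) i) (L i * nrm i rho))
  (chi_convex : forall i, convex_function (X i) (chi i))
  (omega_grad : forall i z, z \in X i -> has_gradient_at (omega i) (domega i) z)
  (omega_sc : forall i, strongly_convex_on (X i) (nrm i) (omega i))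
  (P_prox : forall i, is_prox_map (X i) (omega i) (domega i) (chi i) (P i))
  (phistar_le : forall x, inX X x -> phistar <= phi f chi x) (x1X : inX X x1).
Set Implicit Arguments.

Local Notation Lbar := (bmax L).
Local Notation gamma := (fun _ : nat => Lbar^-1).
Local Notation p := (fun _ : 'I_b => b%:R^-1).
Local Notation x_ s k := (sbmd_iter g P gamma x1 s k).
Local Notation sum_phi k := (\sum_(s : {ffun 'I_K -> 'I_b}) phi f chi (x_ s k)).
Local Notation sum_gradmap k :=
  (\sum_(s : {ffun 'I_K -> 'I_b}) gradmap_sqnorm nrm P (x_ s k) (g (x_ s k)) (gamma k)).

Lemma Lbar_gt0 : 0 < Lbar.
Proof. exact: lt_le_trans (L_gt0 (Ordinal b_gt0)) (le_bmax _ _). Qed.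

Lemma half_le_step_factor i : 2^-1 <= 1 - L i / 2 * Lbar^-1.
Proof.
have : L i * Lbar^-1 <= 1 by rewrite ler_pdivrMr ?Lbar_gt0 ?mul1r ?le_bmax.
by rewrite mulrAC; lra.
Qed.

Lemma sbmd_iter_feasible (s : 'I_K -> 'I_b) k : inX X (x_ s k).
Proof.
apply: sbmd_iter_inX x1X => [i u y c uX c_gt0|_]; last by rewrite invr_gt0 Lbar_gt0.
by case: (P_prox i u y c uX c_gt0).
Qed.

Lemma sbmd_step_descent (s : 'I_K -> 'I_b) (k : 'I_K) :
  phi f chi (x_ s k.+1) <= phi f chi (x_ s k) - (2 * Lbar)^-1 *
    nrm (s k) ((Lbar^-1)^-1 *: (blk (x_ s k) (s k)
                 - P (s k) (blk (x_ s k) (s k)) (blk (g (x_ s k)) (s k)) Lbar^-1)) ^+ 2.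
Proof.
have gamma_gt0 : 0 < Lbar^-1 by rewrite invr_gt0 Lbar_gt0.
rewrite sbmd_iterS; apply: le_trans (block_prox_descent (nrm_norm _) (X_convex _)
  f_grad (g_lip _) (chi_convex _) (omega_grad _) (omega_sc _) (P_prox _)
  (sbmd_iter_feasible s k _) gamma_gt0) _.
rewrite lerB // ler_wpM2r ?sqr_ge0 // invfM mulrC ler_pM2l //.
exact: half_le_step_factor.
Qed.

Lemma sum_phi_descent (k : 'I_K) :
  sum_phi k.+1 <= sum_phi k - (2 * b%:R * Lbar)^-1 * sum_gradmap k.
Proof.
pose h (s : {ffun 'I_K -> 'I_b}) i := nrm i ((Lbar^-1)^-1 *:
  (blk (x_ s k) i - P i (blk (x_ s k) i) (blk (g (x_ s k)) i) Lbar^-1)) ^+ 2.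
have h_inv (s : {ffun 'I_K -> 'I_b}) (c : 'I_b) :
    h [ffun j => if j == k then c else s j] = h s.
  apply: funext => i; rewrite /h (sbmd_iter_eq g P gamma x1 (s' := s)) // => j jk.
  by rewrite ffunE ifN // neq_ltn jk.
have descent : sum_phi k.+1 <= \sum_(s : {ffun 'I_K -> 'I_b})
    (phi f chi (x_ s k) - (2 * Lbar)^-1 * h s (s k)).
  by apply: ler_sum => s _; exact: sbmd_step_descent.
apply: le_trans descent _.
rewrite sumrB -mulr_sumr (sum_ffun_coord b_gt0 h_inv).
by rewrite mulrA -invfM [2 * Lbar * _]mulrAC.
Qed.

Lemma sum_gradmap_le :
  \sum_(k < K) sum_gradmap k
    <= 2 * b%:R * Lbar * (b%:R ^+ K * (phi f chi x1 - phistar)).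
Proof.
set c := 2 * b%:R * Lbar.
have c_gt0 : 0 < c by rewrite !mulr_gt0 ?ltr0n ?Lbar_gt0.
have step (k : 'I_K) : sum_gradmap k <= c * (sum_phi k - sum_phi k.+1).
  by rewrite -ler_pdivrMl //; have := sum_phi_descent k; rewrite -/c; lra.
apply: le_trans (ler_sum _ (fun k _ => step k)) _.
rewrite -mulr_sumr ler_pM2l //.
rewrite -(big_mkord xpredT (fun k => sum_phi k - sum_phi k.+1)).
rewrite (@telescope_sumr_eq _ 0 K (fun k => - sum_phi k)) // => [|k _]; last by ring.
have sum_phi0 : sum_phi 0 = b%:R ^+ K * phi f chi x1.
  rewrite (eq_bigr (fun _ => phi f chi x1)) // sumr_const card_ffun !card_ord.
  by rewrite -natrX mulr_natl.
have sum_phiK : b%:R ^+ K * phistar <= sum_phi K.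
  have card_s : (b ^ K)%N = #|{ffun 'I_K -> 'I_b}| by rewrite card_ffun !card_ord.
  rewrite -natrX mulr_natl card_s -sumr_const.
  by apply: ler_sum => s _; exact/phistar_le/sbmd_iter_feasible.
rewrite sum_phi0; lra.
Qed.

Lemma probR_uniform k : probR K p L gamma k = K%:R^-1.
Proof.
set w := probR_weight p L gamma k.
have w_gt0 : 0 < w.
  rewrite /w /probR_weight mulr_gt0 ?invr_gt0 ?Lbar_gt0 // bmin_gt0 // => i.
  rewrite mulr_gt0 ?invr_gt0 ?ltr0n //; have := half_le_step_factor i; lra.
rewrite /probR -/w (eq_bigr (fun _ => w)) // sumr_const card_ord.
by rewrite -[w *+ K]mulr_natr invfM mulrA mulfV ?gt_eqF // mul1r.
Qed.

Lemma expected_gradmap_uniform :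
  expected_gradmap_sqnorm K p L nrm g P gamma x1
    = (b%:R ^+ K)^-1 * K%:R^-1 * \sum_(k < K) sum_gradmap k.
Proof.
rewrite exchange_big mulr_sumr; apply: eq_bigr => s _.
rewrite prodr_const card_ord exprVn -mulrA; congr (_ * _).
by rewrite mulr_sumr; apply: eq_bigr => k _; rewrite probR_uniform.
Qed.

End UniformSBMD.

Theorem corollary4p4 (R : realType) (b : nat) (n : 'I_b -> nat)
  (X : forall i, set 'rV[R]_(n i))
  (nrm : forall i, 'rV[R]_(n i) -> R)
  (f : 'rV[R]_(\sum_(i < b) n i) -> R)
  (g : 'rV[R]_(\sum_(i < b) n i) -> 'rV[R]_(\sum_(i < b) n i))
  (L : 'I_b -> R)
  (chi : forall i, 'rV[R]_(n i) -> R)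
  (omega : forall i, 'rV[R]_(n i) -> R)
  (domega : forall i, 'rV[R]_(n i) -> 'rV[R]_(n i))
  (Q : R)
  (P : forall i, 'rV[R]_(n i) -> 'rV[R]_(n i) -> R -> 'rV[R]_(n i))
  (phistar : R) (x1 : 'rV[R]_(\sum_(i < b) n i)) (N : nat) :
  (0 < b)%N ->
  (forall i, is_norm (nrm i)) ->
  (forall i, closed (X i) /\ convex_set (X i)) ->
  (forall x, has_gradient_at f g x) ->
  (forall i, 0 < L i) ->
  (forall i x (rho : 'rV[R]_(n i)),
      dual_norm_le (nrm i) (blk (g (x + embed rho)) i - blk (g x) i)
                   (L i * nrm i rho)) ->
  (forall i, convex_function (X i) (chi i) /\ closed_fun_on (X i) (chi i)) ->
  (forall i, (forall z, z \in X i -> has_gradient_at (omega i) (domega i) z)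
             /\ {within X i, continuous (domega i)}
             /\ strongly_convex_on (X i) (nrm i) (omega i)) ->
  (forall i z x, z \in X i -> x \in X i ->
      bregman (omega i) (domega i) z x <= Q / 2 * nrm i (z - x) ^+ 2) ->
  (forall i, is_prox_map (X i) (omega i) (domega i) (chi i) (P i)) ->
  (exists2 xs, inX X xs & phi f chi xs = phistar) ->
  (forall x, inX X x -> phistar <= phi f chi x) ->
  inX X x1 ->
  (0 < N)%N ->
  let Lbar := bmax L in
  let p := fun _ : 'I_b => (b%:R)^-1 in
  let gamma := fun _ : nat => Lbar^-1 in
  expected_gradmap_sqnorm N p L nrm g P gamma x1
    <= 2 * b%:R * Lbar * (phi f chi x1 - phistar) / N%:R.
Proof.
move=> b_gt0 nrm_norm X_cc f_grad L_gt0 g_lip chi_cc omega_cc _ P_prox _ phistar_le x1X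
  N_gt0; cbv zeta.
have := sum_gradmap_le N b_gt0 nrm_norm (fun i => (X_cc i).2) f_grad L_gt0 g_lip
  (fun i => (chi_cc i).1) (fun i => (omega_cc i).1) (fun i => (omega_cc i).2.2)
  P_prox phistar_le x1X.
rewrite (expected_gradmap_uniform nrm g P x1 N b_gt0 L_gt0).
set S := \sum_(k < N) _ => S_le.
rewrite mulrAC ler_pM2r ?invr_gt0 ?ltr0n // ler_pdivrMl ?exprn_gt0 ?ltr0n //.
by rewrite mulrCA.
Qed.
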